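(* Let $H=(H_p,\Delta,\epsilon,S,\pi)_{p\in G}$ be a crossed group-cograded weak Hopf quasigroup over a group $G$. Define its mirror $\widetilde H=(\widetilde H_p,\widetilde\Delta,\widetilde\epsilon,\widetilde S,\widetilde\pi)_{p\in G}$ as follows: (1) as an algebra, $\widetilde H_p=H_{p^{-1}}$ for every $p\in G$; (2) for $p,q\in G$ the comultiplication $\widetilde\Delta_{p,q}:\widetilde H_{pq}=H_{q^{-1}p^{-1}}\to \widetilde H_p\otimes\widetilde H_q=H_{p^{-1}}\otimes H_{q^{-1}}$ is $\widetilde\Delta_{p,q}=(\pi_q\otimes \mathrm{id}_{H_{q^{-1}}})\circ\Delta_{q^{-1}p^{-1}q,\,q^{-1}}$; (3) the counit is $\widetilde\epsilon=\epsilon:\widetilde H_e=H_e\to k$; (4) the antipode is $\widetilde S_p=\pi_p\circ S_{p^{-1}}:\widetilde H_p=H_{p^{-1}}\to H_p=\widetilde H_{p^{-1}}$; (5) the crossing is $\widetilde\pi_p=\pi_p$ (viewed as a map $\widetilde H_q=H_{q^{-1}}\to H_{pq^{-1}p^{-1}}=\widetilde H_{pqp^{-1}}$). Then $\widetilde H$ is again a crossed group-cograded weak Hopf quasigroup over $G$.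
   Context: Let $k$ be a field and $G$ a group with identity $e$. A group-cograded weak Hopf quasigroup $H$ over $G$ consists of a family $(H_p)_{p\in G}$ of unital, not necessarily associative, $k$-algebras with units $1_p$; $k$-linear maps $\Delta_{p,q}:H_{pq}\to H_p\otimes H_q$ ($p,q\in G$), written $\Delta_{p,q}(h)=h_{(1,p)}\otimes h_{(2,q)}$, which are coassociative, $(\Delta_{p,q}\otimes\mathrm{id})\Delta_{pq,r}=(\mathrm{id}\otimes\Delta_{q,r})\Delta_{p,qr}$ (iterated coproducts are written $h_{(1,p)}\otimes h_{(2,q)}\otimes h_{(3,r)}$, etc.); and a linear counit $\epsilon:H_e\to k$ with $(\epsilon\otimes\mathrm{id})\Delta_{e,p}=\mathrm{id}=(\mathrm{id}\otimes\epsilon)\Delta_{p,e}$; such that: (1) each $\Delta_{p,q}$ is multiplicative, and $(\Delta_{p,q}\otimes\mathrm{id})\Delta_{pq,r}(1_{pqr})=(\Delta_{p,q}(1_{pq})\otimes 1_r)(1_p\otimes\Delta_{q,r}(1_{qr}))=(1_p\otimes\Delta_{q,r}(1_{qr}))(\Delta_{p,q}(1_{pq})\otimes 1_r)$ for all $p,q,r$; (2) $\epsilon((gh)l)=\epsilon(g(hl))=\epsilon(gh_{(2,e)})\epsilon(h_{(1,e)}l)=\epsilon(gh_{(1,e)})\epsilon(h_{(2,e)}l)$ for $g,h,l\in H_e$; (3) writing $\Delta_{p,q}(1_{pq})=1_{(1,p)}\otimes 1_{(2,q)}$ and defining $\epsilon^t_p,\epsilon^s_p:H_e\to H_p$ by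 $\epsilon^t_p(h)=\epsilon(1_{(1,e)}h)1_{(2,p)}$ and $\epsilon^s_p(h)=1_{(1,p)}\epsilon(h1_{(2,e)})$, there is a family of linear maps $S_p:H_p\to H_{p^{-1}}$ (the antipode) with $S_p(h)=S_p(h_{(1,p)})\epsilon^t_{p^{-1}}(h_{(2,e)})=\epsilon^s_{p^{-1}}(h_{(1,e)})S_p(h_{(2,p)})$ for $h\in H_p$, and for all $h\in H_e$, $g\in H_p$: $S_{p^{-1}}(h_{(1,p^{-1})})(h_{(2,p)}g)=\epsilon^s_p(h)g$, $h_{(1,p)}(S_{p^{-1}}(h_{(2,p^{-1})})g)=\epsilon^t_p(h)g$, $(gh_{(1,p)})S_{p^{-1}}(h_{(2,p^{-1})})=g\epsilon^t_p(h)$, $(gS_{p^{-1}}(h_{(1,p^{-1})}))h_{(2,p)}=g\epsilon^s_p(h)$. It is crossed if it is equipped with a family of algebra isomorphisms $\pi_p:H_q\to H_{pqp^{-1}}$ ($p,q\in G$), the crossing, such that $(\pi_p\otimes\pi_p)\Delta_{q,r}=\Delta_{pqp^{-1},prp^{-1}}\pi_p$, $\epsilon\pi_p=\epsilon$ and $\pi_{pq}=\pi_p\pi_q$ for all $p,q,r\in G$. *)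

From HB Require Import structures.
From mathcomp Require Import all_boot all_algebra.
Set Implicit Arguments. Unset Strict Implicit. Unset Printing Implicit Defensive.
Import GRing.Theory.
Local Open Scope ring_scope.

Record grp := Grp {
  gcar :> Type;
  gmul : gcar -> gcar -> gcar;
  ginv : gcar -> gcar;
  gunit : gcar;
  gmulA : forall x y z, gmul x (gmul y z) = gmul (gmul x y) z;
  gmul1l : forall x, gmul gunit x = x;
  gmul1r : forall x, gmul x gunit = x;
  gmulVl : forall x, gmul (ginv x) x = gunit;
  gmulVr : forall x, gmul x (ginv x) = gunit }.
Arguments gmul {g}.
Arguments ginv {g}.
Arguments gunit {g}.

Section GroupFacts.
Variable G : grp.
Implicit Types p q r x y : G.

Definition gconj p q : G := gmul (gmul p q) (ginv p).

Lemma ginv_uniq x y : gmul x y = gunit -> y = ginv x.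
Proof.
move=> h; rewrite -[y]gmul1l -(gmulVl x) -gmulA h gmul1r //.
Qed.

Lemma ginvK x : ginv (ginv x) = x.
Proof. by symmetry; apply: ginv_uniq; apply: gmulVl. Qed.

Lemma ginv1 : ginv (gunit : G) = gunit.
Proof. by symmetry; apply: ginv_uniq; rewrite gmul1l. Qed.

Lemma ginvM x y : ginv (gmul x y) = gmul (ginv y) (ginv x).
Proof.
symmetry; apply: ginv_uniq.
by rewrite gmulA -(gmulA x) gmulVr gmul1r gmulVr.
Qed.

Lemma gconjM p q r : gconj p (gmul q r) = gmul (gconj p q) (gconj p r).
Proof.
rewrite /gconj !gmulA -(gmulA _ (ginv p) p) gmulVl gmul1r //.
Qed.

Lemma gconj1 p : gconj p gunit = gunit.
Proof. by rewrite /gconj gmul1r gmulVr. Qed.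

Lemma gconjMl p q r : gconj (gmul p q) r = gconj p (gconj q r).
Proof. by rewrite /gconj ginvM !gmulA. Qed.

Lemma gconjV p q : gconj p (ginv q) = ginv (gconj p q).
Proof. by rewrite /gconj !ginvM ginvK gmulA. Qed.

Definition mir_idx p q : G := gmul (gmul (ginv q) (ginv p)) q.

Lemma mir_dom p q : ginv (gmul p q) = gmul (mir_idx p q) (ginv q).
Proof. by rewrite /mir_idx ginvM -gmulA gmulVr gmul1r. Qed.

Lemma mir_conj p q : gconj q (mir_idx p q) = ginv p.
Proof.
by rewrite /gconj /mir_idx !gmulA gmulVr gmul1l -gmulA gmulVr gmul1r.
Qed.

Lemma mir_antip p : gconj p (ginv (ginv p)) = ginv (ginv p).
Proof. by rewrite ginvK /gconj -gmulA gmulVr gmul1r. Qed.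

End GroupFacts.

Section Tensors.
Variable k : fieldType.

Definition islin (U V : lmodType k) (f : U -> V) : Prop :=
  forall (a : k) (u v : U), f (a *: u + v) = a *: f u + f v.

Definition bilin (U V Z : lmodType k) (B : U -> V -> Z) : Prop :=
  (forall v, islin (fun u => B u v)) /\ (forall u, islin (B u)).

Definition trilin (U V W Z : lmodType k) (T : U -> V -> W -> Z) : Prop :=
  [/\ (forall v w, islin (fun u => T u v w)),
      (forall u w, islin (fun v => T u v w)) &
      (forall u v, islin (T u v))].

(* An element of U (x) V is represented by a finite formal sum
   sum_i u_i (x) v_i, i.e. a list of pairs; two lists represent the same
   tensor iff every bilinear map (into any k-vector space) takes the same
   value on them (universal property of the tensor product). *)
Definition teq2 (U V : lmodType k) (s t : seq (U * V)) : Prop :=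
  forall (Z : lmodType k) (B : U -> V -> Z), bilin B ->
    \sum_(x <- s) B x.1 x.2 = \sum_(x <- t) B x.1 x.2.

Definition teq3 (U V W : lmodType k) (s t : seq (U * V * W)) : Prop :=
  forall (Z : lmodType k) (T : U -> V -> W -> Z), trilin T ->
    \sum_(x <- s) T x.1.1 x.1.2 x.2 = \sum_(x <- t) T x.1.1 x.1.2 x.2.

End Tensors.

Definition castH (k : fieldType) (G : grp) (H : G -> lmodType k) (p q : G)
  (e : p = q) (x : H p) : H q := eq_rect p (fun r => (H r : Type)) x q e.

Section CGWHQ.
Local Unset Implicit Arguments.
Variables (k : fieldType) (G : grp) (H : G -> lmodType k).
Variable mul : forall p, H p -> H p -> H p.
Variable one : forall p, H p.
Variable cop : forall p q : G, H (gmul p q) -> seq (H p * H q).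
Variable eps : H gunit -> k.
Variable S : forall p : G, H p -> H (ginv p).
Variable pi : forall p q : G, H q -> H (gconj p q).

Local Notation e := (@gunit G).
Local Notation cH := (@castH _ _ H _ _).

Definition eps_t (p : G) (h : H e) : H p :=
  \sum_(x <- cop e p (one (gmul e p))) eps (mul e x.1 h) *: x.2.
Definition eps_s (p : G) (h : H e) : H p :=
  \sum_(x <- cop p e (one (gmul p e))) eps (mul e h x.2) *: x.1.

Definition cop_l (p q r : G) (h : H (gmul (gmul p q) r)) : seq (H p * H q * H r) :=
  flatten [seq [seq (y.1, y.2, x.2) | y <- cop p q x.1] | x <- cop (gmul p q) r h].
Definition cop_r (p q r : G) (h : H (gmul p (gmul q r))) : seq (H p * H q * H r) :=
  flatten [seq [seq (x.1, y.1, y.2) | y <- cop q r x.2] | x <- cop p (gmul q r) h].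

Definition tmul2 (p q : G) (s t : seq (H p * H q)) : seq (H p * H q) :=
  [seq (mul p x.1 y.1, mul q x.2 y.2) | x <- s, y <- t].
Definition tmul3 (p q r : G) (s t : seq (H p * H q * H r)) : seq (H p * H q * H r) :=
  [seq (mul p x.1.1 y.1.1, mul q x.1.2 y.1.2, mul r x.2 y.2) | x <- s, y <- t].
Definition tscale2 (p q : G) (a : k) (s : seq (H p * H q)) : seq (H p * H q) :=
  [seq (a *: x.1, x.2) | x <- s].

Record is_cgwhq : Prop := {
  (* each H_p is a unital (not necessarily associative) k-algebra *)
  mul_bilin : forall p, bilin (mul p);
  mul1x : forall p (x : H p), mul p (one p) x = x;
  mulx1 : forall p (x : H p), mul p x (one p) = x;
  cop_lin : forall p q (a : k) (h h' : H (gmul p q)),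
    teq2 (cop p q (a *: h + h')) (tscale2 p q a (cop p q h) ++ cop p q h');
  eps_lin : forall (a : k) (u v : H e), eps (a *: u + v) = a * eps u + eps v;
  S_lin : forall p, islin (S p);
  coassoc : forall p q r (h : H (gmul (gmul p q) r)),
    teq3 (cop_l p q r h) (cop_r p q r (cH (esym (gmulA p q r)) h));
  counit_l : forall p (h : H p),
    \sum_(x <- cop e p (cH (esym (gmul1l p)) h)) eps x.1 *: x.2 = h;
  counit_r : forall p (h : H p),
    \sum_(x <- cop p e (cH (esym (gmul1r p)) h)) eps x.2 *: x.1 = h;
  cop_mul : forall p q (a b : H (gmul p q)),
    teq2 (cop p q (mul (gmul p q) a b)) (tmul2 p q (cop p q a) (cop p q b));
  cop_one1 : forall p q r,
    teq3 (cop_l p q r (one (gmul (gmul p q) r)))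
         (tmul3 p q r [seq (x.1, x.2, one r) | x <- cop p q (one (gmul p q))]
                      [seq (one p, y.1, y.2) | y <- cop q r (one (gmul q r))]);
  cop_one2 : forall p q r,
    teq3 (cop_l p q r (one (gmul (gmul p q) r)))
         (tmul3 p q r [seq (one p, y.1, y.2) | y <- cop q r (one (gmul q r))]
                      [seq (x.1, x.2, one r) | x <- cop p q (one (gmul p q))]);
  eps_mul1 : forall g h l : H e,
    eps (mul e (mul e g h) l) = eps (mul e g (mul e h l));
  eps_mul2 : forall g h l : H e,
    eps (mul e (mul e g h) l) =
    \sum_(x <- cop e e (cH (esym (gmul1l e)) h))
       eps (mul e g x.2) * eps (mul e x.1 l);
  eps_mul3 : forall g h l : H e,
    eps (mul e (mul e g h) l) =
    \sum_(x <- cop e e (cH (esym (gmul1l e)) h))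
       eps (mul e g x.1) * eps (mul e x.2 l);
  S_epst : forall p (h : H p),
    S p h = \sum_(x <- cop p e (cH (esym (gmul1r p)) h))
              mul (ginv p) (S p x.1) (eps_t (ginv p) x.2);
  S_epss : forall p (h : H p),
    S p h = \sum_(x <- cop e p (cH (esym (gmul1l p)) h))
              mul (ginv p) (eps_s (ginv p) x.1) (S p x.2);
  S_ax1 : forall p (h : H e) (g : H p),
    \sum_(x <- cop (ginv p) p (cH (esym (gmulVl p)) h))
       mul p (cH (ginvK p) (S (ginv p) x.1)) (mul p x.2 g) = mul p (eps_s p h) g;
  S_ax2 : forall p (h : H e) (g : H p),
    \sum_(x <- cop p (ginv p) (cH (esym (gmulVr p)) h))
       mul p x.1 (mul p (cH (ginvK p) (S (ginv p) x.2)) g) = mul p (eps_t p h) g;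
  S_ax3 : forall p (h : H e) (g : H p),
    \sum_(x <- cop p (ginv p) (cH (esym (gmulVr p)) h))
       mul p (mul p g x.1) (cH (ginvK p) (S (ginv p) x.2)) = mul p g (eps_t p h);
  S_ax4 : forall p (h : H e) (g : H p),
    \sum_(x <- cop (ginv p) p (cH (esym (gmulVl p)) h))
       mul p (mul p g (cH (ginvK p) (S (ginv p) x.1))) x.2 = mul p g (eps_s p h);
  pi_lin : forall p q, islin (pi p q);
  pi_mul : forall p q (a b : H q),
    pi p q (mul q a b) = mul (gconj p q) (pi p q a) (pi p q b);
  pi_one : forall p q, pi p q (one q) = one (gconj p q);
  pi_bij : forall p q, bijective (pi p q);
  pi_cop : forall p q r (h : H (gmul q r)),
    teq2 [seq (pi p q x.1, pi p r x.2) | x <- cop q r h]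
         (cop (gconj p q) (gconj p r) (cH (gconjM p q r) (pi p (gmul q r) h)));
  pi_eps : forall p (h : H e), eps (cH (gconj1 p) (pi p e h)) = eps h;
  pi_comp : forall p q r (h : H r),
    cH (gconjMl p q r) (pi (gmul p q) r h) = pi p (gconj q r) (pi q r h)
}.

End CGWHQ.

Section Mirror.
Local Unset Implicit Arguments.
Variables (k : fieldType) (G : grp) (H : G -> lmodType k).
Variable mul : forall p, H p -> H p -> H p.
Variable one : forall p, H p.
Variable cop : forall p q : G, H (gmul p q) -> seq (H p * H q).
Variable eps : H gunit -> k.
Variable S : forall p : G, H p -> H (ginv p).
Variable pi : forall p q : G, H q -> H (gconj p q).

Definition mirH : G -> lmodType k := fun p => H (ginv p).
Definition mir_mul (p : G) : mirH p -> mirH p -> mirH p := mul (ginv p).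
Definition mir_one (p : G) : mirH p := one (ginv p).
Definition mir_cop (p q : G) (h : mirH (gmul p q)) : seq (mirH p * mirH q) :=
  [seq (@castH _ _ H _ _ (mir_conj p q) (pi q (mir_idx p q) x.1), x.2)
  | x <- cop (mir_idx p q) (ginv q) (@castH _ _ H _ _ (mir_dom p q) h)].
Definition mir_eps (h : mirH gunit) : k := eps (@castH _ _ H _ _ (ginv1 G) h).
Definition mir_S (p : G) (h : mirH p) : mirH (ginv p) :=
  @castH _ _ H _ _ (mir_antip p) (pi p (ginv (ginv p)) (S (ginv p) h)).
Definition mir_pi (p q : G) (h : mirH q) : mirH (gconj p q) :=
  @castH _ _ H _ _ (gconjV p q) (pi p (ginv q) h).

End Mirror.

(* Each axiom of the mirror at given indices is the corresponding axiom of H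
   at the inverted indices, conjugated by suitable crossings.  This works
   because every pi_p is an algebra isomorphism commuting with the coproduct
   and the counit (hence with eps_t and eps_s), pi_e is the identity and
   pi_(p^-1) pi_p = id, so the crossings can be moved through every identity.
   Pushing pi through a coproduct is only possible against bilinear test
   maps, since tensors are identified through the universal property.
   Indices in G agree only propositionally, and proof irrelevance identifies
   the resulting transports. *)

From Pilot Require Import Defs.
From mathcomp Require Import all_boot all_algebra.
From Stdlib Require Import ProofIrrelevance.
Set Implicit Arguments. Unset Strict Implicit. Unset Printing Implicit Defensive.
Import GRing.Theory.
Local Open Scope ring_scope.

Section GroupWords.
Variable G : grp.

Lemma gmulKV (x y : G) : gmul (gmul x (ginv y)) y = x.
Proof. by rewrite -gmulA gmulVl gmul1r. Qed.

Lemma gmulVK (x y : G) : gmul (gmul x y) (ginv y) = x.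
Proof. by rewrite -gmulA gmulVr gmul1r. Qed.

End GroupWords.

Ltac gsolve :=
  rewrite /mir_idx /gconj;
  repeat rewrite ?ginvM ?ginvK ?ginv1 ?gmulA ?gmulKV ?gmulVK
                 ?gmulVr ?gmulVl ?gmul1l ?gmul1r.

Lemma mir_idxM (G : grp) (p q r : G) :
  mir_idx (gmul p q) r = gmul (mir_idx p (gmul q r)) (mir_idx q r).
Proof. by gsolve. Qed.

Lemma mir_idx_conj (G : grp) (p q r : G) :
  gconj r (mir_idx p (gmul q r)) = mir_idx p q.
Proof. by gsolve. Qed.

Section Multilinear.
Variable k : fieldType.
Implicit Types U V W Z : lmodType k.

Lemma lin0 U V (f : U -> V) : islin f -> f 0 = 0.
Proof.
move=> hf; have := hf 1 0 0; rewrite !scale1r addr0 => f0D.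
by apply: (addrI (f 0)); rewrite addr0 -f0D.
Qed.

Lemma linZ U V (f : U -> V) : islin f -> forall a u, f (a *: u) = a *: f u.
Proof. by move=> hf a u; rewrite -[a *: u]addr0 hf lin0 // addr0. Qed.

Lemma linD U V (f : U -> V) : islin f -> forall u v, f (u + v) = f u + f v.
Proof. by move=> hf u v; rewrite -[u]scale1r hf !scale1r. Qed.

Lemma lin_sum U V (f : U -> V) I (s : seq I) (F : I -> U) : islin f ->
  f (\sum_(i <- s) F i) = \sum_(i <- s) f (F i).
Proof.
move=> hf; elim: s => [|x s IH]; first by rewrite !big_nil lin0.
by rewrite !big_cons linD // IH.
Qed.

Lemma islin_id U : islin (fun x : U => x).
Proof. by []. Qed.

Lemma islin_comp U V W (f : V -> W) (g : U -> V) :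
  islin f -> islin g -> islin (fun x => f (g x)).
Proof. by move=> hf hg a u v; rewrite hg hf. Qed.

Lemma islin_sum U V I (s : seq I) (F : I -> U -> V) :
  (forall i, islin (F i)) -> islin (fun u => \sum_(i <- s) F i u).
Proof.
move=> hF a u v; rewrite scaler_sumr -big_split /=.
by apply: eq_bigr => i _; rewrite hF.
Qed.

Lemma bilin_comp U V U' V' Z (B : U -> V -> Z) (f : U' -> U) (g : V' -> V) :
  bilin B -> islin f -> islin g -> bilin (fun u v => B (f u) (g v)).
Proof.
by move=> [Bl Br] hf hg; split=> [v|u] a x y /=; rewrite ?hf ?hg ?Bl ?Br.
Qed.

Lemma trilin_comp U V W U' V' W' Z (T : U -> V -> W -> Z)
    (f : U' -> U) (g : V' -> V) (h : W' -> W) :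
  trilin T -> islin f -> islin g -> islin h ->
  trilin (fun u v w => T (f u) (g v) (h w)).
Proof.
move=> [T1 T2 T3] hf hg hh.
by split=> [v w|u w|u v] a x y /=; rewrite ?hf ?hg ?hh ?T1 ?T2 ?T3.
Qed.

Lemma trilin_bilin U V W Z (T : U -> V -> W -> Z) w :
  trilin T -> bilin (fun u v => T u v w).
Proof. by case. Qed.

Lemma bilin_scalel U V (f : U -> k^o) : islin f ->
  bilin (fun (u : U) (v : V) => f u *: v).
Proof.
move=> hf; split=> [v|u] a x y /=; first by rewrite hf scalerDl scalerA.
by rewrite scalerDr !scalerA mulrC.
Qed.

Lemma bilin_scaler U V (f : V -> k^o) : islin f ->
  bilin (fun (u : U) (v : V) => f v *: u).
Proof.
move=> hf; split=> [v|u] a x y /=; first by rewrite scalerDr !scalerA mulrC.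
by rewrite hf scalerDl scalerA.
Qed.

End Multilinear.

Section IteratedCoproduct.
Local Unset Implicit Arguments.
Variables (k : fieldType) (G : grp) (K : G -> lmodType k) (Z : nmodType).
Variable c : forall p q : G, K (gmul p q) -> seq (K p * K q).

Lemma sum_cop_l p q r h (F : K p * K q * K r -> Z) :
  \sum_(x <- cop_l k G K c p q r h) F x =
  \sum_(x <- c (gmul p q) r h) \sum_(z <- c p q x.1) F (z.1, z.2, x.2).
Proof. by rewrite big_flatten big_map; apply: eq_bigr => x _; rewrite big_map. Qed.

Lemma sum_cop_r p q r h (F : K p * K q * K r -> Z) :
  \sum_(x <- cop_r k G K c p q r h) F x =
  \sum_(x <- c p (gmul q r) h) \sum_(z <- c q r x.2) F (x.1, z.1, z.2).
Proof. by rewrite big_flatten big_map; apply: eq_bigr => x _; rewrite big_map. Qed.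

End IteratedCoproduct.

#[local] Arguments mul_bilin {k G H mul one cop eps S pi}.
#[local] Arguments mul1x {k G H mul one cop eps S pi}.
#[local] Arguments mulx1 {k G H mul one cop eps S pi}.
#[local] Arguments cop_lin {k G H mul one cop eps S pi}.
#[local] Arguments eps_lin {k G H mul one cop eps S pi}.
#[local] Arguments S_lin {k G H mul one cop eps S pi}.
#[local] Arguments coassoc {k G H mul one cop eps S pi}.
#[local] Arguments counit_l {k G H mul one cop eps S pi}.
#[local] Arguments counit_r {k G H mul one cop eps S pi}.
#[local] Arguments cop_mul {k G H mul one cop eps S pi}.
#[local] Arguments cop_one1 {k G H mul one cop eps S pi}.
#[local] Arguments cop_one2 {k G H mul one cop eps S pi}.
#[local] Arguments eps_mul1 {k G H mul one cop eps S pi}.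
#[local] Arguments eps_mul2 {k G H mul one cop eps S pi}.
#[local] Arguments eps_mul3 {k G H mul one cop eps S pi}.
#[local] Arguments S_epst {k G H mul one cop eps S pi}.
#[local] Arguments S_epss {k G H mul one cop eps S pi}.
#[local] Arguments S_ax1 {k G H mul one cop eps S pi}.
#[local] Arguments S_ax2 {k G H mul one cop eps S pi}.
#[local] Arguments S_ax3 {k G H mul one cop eps S pi}.
#[local] Arguments S_ax4 {k G H mul one cop eps S pi}.
#[local] Arguments pi_lin {k G H mul one cop eps S pi}.
#[local] Arguments Defs.pi_mul {k G H mul one cop eps S pi}.
#[local] Arguments pi_one {k G H mul one cop eps S pi}.
#[local] Arguments pi_bij {k G H mul one cop eps S pi}.
#[local] Arguments pi_cop {k G H mul one cop eps S pi}.
#[local] Arguments pi_eps {k G H mul one cop eps S pi}.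
#[local] Arguments pi_comp {k G H mul one cop eps S pi}.

Section Mirror.
Local Unset Implicit Arguments.
Variables (k : fieldType) (G : grp) (H : G -> lmodType k).
Variables (mul : forall p, H p -> H p -> H p) (one : forall p, H p).
Variable cop : forall p q : G, H (gmul p q) -> seq (H p * H q).
Variables (eps : H gunit -> k) (S : forall p : G, H p -> H (ginv p)).
Variable pi : forall p q : G, H q -> H (gconj p q).
Hypothesis HX : is_cgwhq k G H mul one cop eps S pi.
Local Set Implicit Arguments.

Local Notation e := (@gunit G).
Local Notation cH := (@castH k G H _ _).
Local Notation eps_t := (eps_t k G H mul one cop eps).
Local Notation eps_s := (eps_s k G H mul one cop eps).

Lemma cH_irr p q (E E' : p = q) x : cH E x = cH E' x.
Proof. by rewrite (proof_irrelevance _ E E'). Qed.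

Lemma cH_id p (E : p = p) x : cH E x = x.
Proof. by rewrite (cH_irr E erefl). Qed.

Lemma cH_comp p q r (E1 : p = q) (E2 : q = r) x :
  cH E2 (cH E1 x) = cH (etrans E1 E2) x.
Proof. by subst r. Qed.

Lemma cH_K p q (E : p = q) (E' : q = p) x : cH E' (cH E x) = x.
Proof. by rewrite cH_comp cH_id. Qed.

Lemma cH_lin p q (E : p = q) : islin (cH E).
Proof. by subst q. Qed.

Lemma cH_mul p q (E : p = q) a b : cH E (mul p a b) = mul q (cH E a) (cH E b).
Proof. by subst q. Qed.

Lemma cH_one p q (E : p = q) : cH E (one p) = one q.
Proof. by subst q. Qed.

(* Structure maps taking their index equation as a parameter, so that the
   lemmas below apply to indices that are only propositionally equal. *)
Definition piE p q r (E : gconj p q = r) (h : H q) : H r := cH E (pi p q h).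
Definition copE a b c (E : c = gmul a b) (h : H c) := cop a b (cH E h).
Definition epsE a (E : a = e) (h : H a) := eps (cH E h).

Ltac cast_irr := repeat match goal with
 | |- context[@castH k G H ?p ?q ?E1 ?x] =>
   match goal with |- context[@castH k G H p q ?E2 x] =>
     tryif constr_eq E1 E2 then fail else rewrite (@cH_irr p q E1 E2 x) end
 end.

Lemma piE_irr p q r (E E' : gconj p q = r) h : piE E h = piE E' h.
Proof. exact: cH_irr. Qed.

Lemma piE_lin p q r (E : gconj p q = r) : islin (piE E).
Proof. exact: islin_comp (cH_lin E) (pi_lin HX p q). Qed.

Lemma piE_mul p q r (E : gconj p q = r) a b :
  piE E (mul q a b) = mul r (piE E a) (piE E b).
Proof. by rewrite /piE (Defs.pi_mul HX) cH_mul. Qed.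

Lemma piE_one p q r (E : gconj p q = r) : piE E (one q) = one r.
Proof. by rewrite /piE (pi_one HX) cH_one. Qed.

Lemma piE_bij p q r (E : gconj p q = r) : bijective (piE E).
Proof.
subst r; have [g piK gK] := pi_bij HX p q.
by exists g => x; rewrite /piE cH_id ?piK ?gK.
Qed.

Lemma piE_castl p q q' r (E' : q = q') (E : gconj p q' = r) h :
  piE E (cH E' h) = piE (etrans (f_equal (gconj p) E') E) h.
Proof. by subst q'; rewrite cH_id; apply: piE_irr. Qed.

Lemma piE_castr p q r r' (E' : r = r') (E : gconj p q = r) h :
  cH E' (piE E h) = piE (etrans E E') h.
Proof. by rewrite /piE cH_comp. Qed.

Lemma piE_comp p p' pp q q' r (Ep : pp = gmul p p') (E1 : gconj p' q = q')
    (E : gconj p q' = r) (E2 : gconj pp q = r) h :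
  piE E (piE E1 h) = piE E2 h.
Proof.
subst pp q'; rewrite /piE cH_id -(pi_comp HX p p' q h) cH_comp; exact: cH_irr.
Qed.

Lemma piE_eq p p' q r (E : gconj p q = r) (E' : gconj p' q = r) h :
  p = p' -> piE E h = piE E' h.
Proof. by move=> pp'; subst p'; apply: piE_irr. Qed.

Lemma piE_comp_eq p p' s s' q q' q'' r (E : gconj p q' = r) (E1 : gconj p' q = q')
    (E' : gconj s q'' = r) (E1' : gconj s' q = q'') h :
  gmul p p' = gmul s s' -> piE E (piE E1 h) = piE E' (piE E1' h).
Proof.
move=> pp's.
have E2 : gconj (gmul p p') q = r by rewrite gconjMl E1 E.
by rewrite (piE_comp erefl E1 E E2) (piE_comp pp's E1' E' E2).
Qed.

(* pi_e is idempotent by pi_comp and injective, hence the identity. *)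
Lemma piE_unit p q r (E : gconj p q = r) (Ep : p = e) (E' : q = r) h :
  piE E h = cH E' h.
Proof.
subst p; case: r / E' E => E /=; apply: (bij_inj (piE_bij E)).
exact: (piE_comp (esym (gmul1l e)) E E E h).
Qed.

Lemma piEV p p' q q' r (E1 : gconj p q = q') (E2 : gconj p' q' = r)
    (Ep : gmul p' p = e) (E' : q = r) h :
  piE E2 (piE E1 h) = cH E' h.
Proof.
have E3 : gconj (gmul p' p) q = r by rewrite Ep /gconj ginv1 gmul1r gmul1l.
by rewrite (piE_comp erefl E1 E2 E3) (piE_unit _ Ep E').
Qed.

Lemma copE_castl a b c c' (E' : c = c') (E : c' = gmul a b) h :
  copE E (cH E' h) = copE (etrans E' E) h.
Proof. by rewrite /copE cH_comp. Qed.

Lemma sum_copE_castr (Z : nmodType) a a' b b' c (Ea : a = a') (Eb : b = b')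
    (E : c = gmul a b) (E' : c = gmul a' b') h (F : H a' * H b' -> Z) :
  \sum_(x <- copE E' h) F x = \sum_(x <- copE E h) F (cH Ea x.1, cH Eb x.2).
Proof.
subst a' b'; rewrite /copE (cH_irr E E').
by apply: eq_bigr => -[x y].
Qed.

Lemma sum_copE_lin a b c (E : c = gmul a b) (Z : lmodType k) (B : H a -> H b -> Z) :
  bilin B -> islin (fun u => \sum_(x <- copE E u) B x.1 x.2).
Proof.
move=> hB al u v; rewrite /copE cH_lin (cop_lin HX a b al _ _ Z B hB) big_cat.
rewrite big_map scaler_sumr; congr (_ + _); apply: eq_bigr => x _.
by rewrite (linZ (hB.1 _)).
Qed.

Lemma sum_copE_pi p q r c (E : c = gmul q r) a b d (Ea : gconj p q = a)
    (Eb : gconj p r = b) (Ed : gconj p c = d) (E' : d = gmul a b) h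
    (Z : lmodType k) (B : H a -> H b -> Z) : bilin B ->
  \sum_(x <- copE E h) B (piE Ea x.1) (piE Eb x.2) =
  \sum_(x <- copE E' (piE Ed h)) B x.1 x.2.
Proof.
move=> hB; subst a b d c; rewrite /piE /copE !cH_id.
rewrite -(big_map (fun x => (pi p q x.1, pi p r x.2)) xpredT (fun x => B x.1 x.2)).
by rewrite (pi_cop HX p q r h Z B hB) (cH_irr E' (gconjM p q r)).
Qed.

Lemma epsE_lin a (E : a = e) : islin (fun h => (epsE E h : k^o)).
Proof. by move=> al u v; rewrite /epsE cH_lin (eps_lin HX). Qed.

Lemma epsE_pi p q r (E : r = e) (E1 : gconj p q = r) (E' : q = e) h :
  epsE E (piE E1 h) = epsE E' h.
Proof.
subst r q; rewrite /epsE /piE !cH_id -(pi_eps HX p h); congr eps; exact: cH_irr.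
Qed.

Lemma copE_counitl a b c (E : c = gmul a b) (Ea : a = e) (Eb : c = b) h :
  \sum_(x <- copE E h) epsE Ea x.1 *: x.2 = cH Eb h.
Proof.
subst a c; rewrite /copE /epsE cH_id -[RHS](counit_l HX b) cH_K.
by apply: eq_bigr => x _; rewrite cH_id.
Qed.

Lemma copE_counitr a b c (E : c = gmul a b) (Eb : b = e) (Ea : c = a) h :
  \sum_(x <- copE E h) epsE Eb x.2 *: x.1 = cH Ea h.
Proof.
subst b c; rewrite /copE /epsE cH_id -[RHS](counit_r HX a) cH_K.
by apply: eq_bigr => x _; rewrite cH_id.
Qed.

Lemma copE_coassoc a b c A B D (EA : A = gmul a b) (EB : B = gmul b c)
    (E1 : D = gmul A c) (E2 : D = gmul a B) h
    (Z : lmodType k) (T : H a -> H b -> H c -> Z) : trilin T ->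
  \sum_(x <- copE E1 h) \sum_(z <- copE EA x.1) T z.1 z.2 x.2 =
  \sum_(x <- copE E2 h) \sum_(z <- copE EB x.2) T x.1 z.1 z.2.
Proof.
move=> hT; subst A B D; rewrite /copE.
have := coassoc HX a b c h Z T hT; rewrite sum_cop_l sum_cop_r /= => ->.
by rewrite (cH_irr E2 (esym (gmulA a b c))).
Qed.

Lemma copE_mul a b c (E : c = gmul a b) u v (Z : lmodType k) (B : H a -> H b -> Z) :
  bilin B ->
  \sum_(x <- copE E (mul c u v)) B x.1 x.2 =
  \sum_(x <- copE E u) \sum_(y <- copE E v) B (mul a x.1 y.1) (mul b x.2 y.2).
Proof.
move=> hB; subst c; rewrite /copE /=.
by rewrite (cop_mul HX a b u v Z B hB) big_allpairs_dep.
Qed.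

Lemma copE_one1 a b c A B D (EA : A = gmul a b) (EB : B = gmul b c)
    (E1 : D = gmul A c) (Z : lmodType k) (T : H a -> H b -> H c -> Z) : trilin T ->
  \sum_(x <- copE E1 (one D)) \sum_(z <- copE EA x.1) T z.1 z.2 x.2 =
  \sum_(x <- copE EA (one A)) \sum_(y <- copE EB (one B)) T x.1 (mul b x.2 y.1) y.2.
Proof.
move=> hT; subst A B D; rewrite /copE /=.
have := cop_one1 HX a b c Z T hT; rewrite sum_cop_l /= => ->.
rewrite big_allpairs_dep big_map; apply: eq_bigr => x _.
by rewrite big_map; apply: eq_bigr => y _ /=; rewrite (mulx1 HX) (mul1x HX).
Qed.

Lemma copE_one2 a b c A B D (EA : A = gmul a b) (EB : B = gmul b c)
    (E1 : D = gmul A c) (Z : lmodType k) (T : H a -> H b -> H c -> Z) : trilin T ->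
  \sum_(x <- copE E1 (one D)) \sum_(z <- copE EA x.1) T z.1 z.2 x.2 =
  \sum_(y <- copE EB (one B)) \sum_(x <- copE EA (one A)) T x.1 (mul b y.1 x.2) y.2.
Proof.
move=> hT; subst A B D; rewrite /copE /=.
have := cop_one2 HX a b c Z T hT; rewrite sum_cop_l /= => ->.
rewrite big_allpairs_dep big_map; apply: eq_bigr => y _.
by rewrite big_map; apply: eq_bigr => x _ /=; rewrite (mulx1 HX) (mul1x HX).
Qed.

Lemma copE_eps_t p a b c (E : c = gmul a b) (Ea : a = e) (Eb : b = p) h :
  \sum_(x <- copE E (one c)) eps (mul e (cH Ea x.1) h) *: cH Eb x.2 = eps_t p h.
Proof. by subst a p c. Qed.

Lemma copE_eps_s p a b c (E : c = gmul a b) (Ea : a = p) (Eb : b = e) h :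
  \sum_(x <- copE E (one c)) eps (mul e h (cH Eb x.2)) *: cH Ea x.1 = eps_s p h.
Proof. by subst b p c. Qed.

Lemma piE_eps_t p q r (E : gconj p q = r) (Ee : gconj p e = e) z :
  piE E (eps_t q z) = eps_t r (piE Ee z).
Proof.
have mul_eps_lin : islin (fun u => (eps (mul e u (piE Ee z)) : k^o)).
  by move=> a u v; rewrite ((mul_bilin HX e).1 _) (eps_lin HX).
have Ed : gconj p (gmul e q) = gmul e r by rewrite gconjM Ee E.
rewrite /Defs.eps_t (lin_sum _ _ (piE_lin E)) -(piE_one Ed).
rewrite -[cop e r _]/(copE (erefl (gmul e r)) _).
rewrite -(sum_copE_pi (erefl _) Ee E Ed _ _ (bilin_scalel _ mul_eps_lin)).
apply: eq_bigr => x _; rewrite (linZ (piE_lin E)) -piE_mul.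
by rewrite -[eps (piE Ee _)]/(epsE erefl _) (epsE_pi _ _ erefl).
Qed.

Lemma piE_eps_s p q r (E : gconj p q = r) (Ee : gconj p e = e) z :
  piE E (eps_s q z) = eps_s r (piE Ee z).
Proof.
have mul_eps_lin : islin (fun v => (eps (mul e (piE Ee z) v) : k^o)).
  by move=> a u v; rewrite ((mul_bilin HX e).2 _) (eps_lin HX).
have Ed : gconj p (gmul q e) = gmul r e by rewrite gconjM Ee E.
rewrite /Defs.eps_s (lin_sum _ _ (piE_lin E)) -(piE_one Ed).
rewrite -[cop r e _]/(copE (erefl (gmul r e)) _).
rewrite -(sum_copE_pi (erefl _) E Ee Ed _ _ (bilin_scaler _ mul_eps_lin)).
apply: eq_bigr => x _; rewrite (linZ (piE_lin E)) -piE_mul.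
by rewrite -[eps (piE Ee _)]/(epsE erefl _) (epsE_pi _ _ erefl).
Qed.

Local Notation tH := (mirH k G H).
Local Notation tmul := (mir_mul k G H mul).
Local Notation tone := (mir_one k G H one).
Local Notation tcop := (mir_cop k G H cop pi).
Local Notation teps := (mir_eps k G H eps).
Local Notation tS := (mir_S k G H S pi).
Local Notation tpi := (mir_pi k G H pi).
Local Notation teps_t := (Defs.eps_t k G tH tmul tone tcop teps).
Local Notation teps_s := (Defs.eps_s k G tH tmul tone tcop teps).
Local Notation mcast := (@castH k G tH _ _).

Lemma mcastE p q (E : p = q) (x : tH p) : mcast E x = cH (f_equal ginv E) x.
Proof. by subst q. Qed.

Lemma mir_SE p (h : tH p) : tS p h = piE (mir_antip p) (S (ginv p) h).
Proof. by []. Qed.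

Lemma mir_piE p q (h : tH q) : tpi p q h = piE (gconjV p q) h.
Proof. by []. Qed.

Lemma sum_mir_cop (Z : nmodType) p q h (F : H (ginv p) * H (ginv q) -> Z) :
  \sum_(x <- tcop p q h) F x =
  \sum_(x <- copE (mir_dom p q) h) F (piE (mir_conj p q) x.1, x.2).
Proof. by rewrite big_map. Qed.

Lemma mirror_mul_bilin p : bilin (tmul p). Proof. exact: (mul_bilin HX (ginv p)). Qed.
Lemma mirror_mul1x p (x : tH p) : tmul p (tone p) x = x. Proof. exact: (mul1x HX). Qed.
Lemma mirror_mulx1 p (x : tH p) : tmul p x (tone p) = x. Proof. exact: (mulx1 HX). Qed.

Lemma mirror_cop_lin p q (a : k) (h h' : tH (gmul p q)) :
  teq2 (tcop p q (a *: h + h')) (tscale2 k G tH p q a (tcop p q h) ++ tcop p q h').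
Proof.
move=> Z B hB; have hB' := bilin_comp hB (piE_lin (mir_conj p q)) (@islin_id _ _).
rewrite big_cat /tscale2 !sum_mir_cop big_map sum_mir_cop (sum_copE_lin _ hB').
by rewrite scaler_sumr; congr (_ + _); apply: eq_bigr => x _; rewrite (linZ (hB.1 _)).
Qed.

Lemma mirror_eps_lin (a : k) (u v : tH gunit) : teps (a *: u + v) = a * teps u + teps v.
Proof. exact: epsE_lin. Qed.

Lemma mirror_S_lin p : islin (tS p).
Proof. exact: islin_comp (piE_lin _) (S_lin HX _). Qed.

Lemma mirror_pi_lin p q : islin (tpi p q). Proof. exact: piE_lin. Qed.

Lemma mirror_pi_mul p q (a b : tH q) :
  tpi p q (tmul q a b) = tmul (gconj p q) (tpi p q a) (tpi p q b).
Proof. exact: piE_mul. Qed.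

Lemma mirror_pi_one p q : tpi p q (tone q) = tone (gconj p q).
Proof. exact: piE_one. Qed.

Lemma mirror_pi_bij p q : bijective (tpi p q). Proof. exact: piE_bij. Qed.

Lemma mirror_pi_eps p (h : tH gunit) : teps (mcast (gconj1 p) (tpi p gunit h)) = teps h.
Proof. by rewrite mcastE mir_piE piE_castr; apply: epsE_pi. Qed.

Lemma mirror_pi_comp p q r (h : tH r) :
  mcast (gconjMl p q r) (tpi (gmul p q) r h) = tpi p (gconj q r) (tpi q r h).
Proof. by rewrite mcastE !mir_piE piE_castr; symmetry; apply: (piE_comp erefl). Qed.

Lemma mirror_eps_mul1 (g h l : tH gunit) :
  teps (tmul gunit (tmul gunit g h) l) = teps (tmul gunit g (tmul gunit h l)).
Proof. by rewrite /mir_eps /mir_mul !cH_mul (eps_mul1 HX). Qed.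

Lemma mirror_counit_l p (h : tH p) :
  \sum_(x <- tcop gunit p (mcast (esym (gmul1l p)) h)) teps x.1 *: x.2 = h.
Proof.
have Ei : mir_idx e p = e by gsolve.
rewrite mcastE sum_mir_cop copE_castl; move: (etrans _ _) => E.
rewrite -[RHS](copE_counitl E Ei erefl).
by apply: eq_bigr => x _; congr (_ *: _); apply: epsE_pi.
Qed.

Lemma mirror_counit_r p (h : tH p) :
  \sum_(x <- tcop p gunit (mcast (esym (gmul1r p)) h)) teps x.2 *: x.1 = h.
Proof.
have Ei : ginv p = mir_idx p e by gsolve.
transitivity (piE (mir_conj p e) (cH Ei h)); last first.
  by rewrite (piE_unit _ erefl (esym Ei)) cH_K.
rewrite mcastE sum_mir_cop copE_castl; move: (etrans _ _) => E.
rewrite -(copE_counitr E (ginv1 G) Ei) (lin_sum _ _ (piE_lin _)).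
by apply: eq_bigr => x _; rewrite (linZ (piE_lin _)).
Qed.

Lemma sum_mir_cop_unit (Z : nmodType) (h : tH e) (F : H e -> H e -> Z) :
  \sum_(x <- tcop e e (mcast (esym (gmul1l e)) h))
     F (cH (ginv1 G) x.1) (cH (ginv1 G) x.2) =
  \sum_(x <- cop e e (cH (esym (gmul1l e)) (cH (ginv1 G) h))) F x.1 x.2.
Proof.
have Ea : mir_idx e e = e by gsolve.
rewrite -[cop e e _]/(copE _ _) copE_castl mcastE sum_mir_cop copE_castl.
move: (etrans (f_equal _ _) _) => E.
rewrite (sum_copE_castr Ea (ginv1 G) E _ h (fun x => F x.1 x.2)).
apply: eq_bigr => x _ /=.
by rewrite (piE_unit _ erefl (etrans Ea (esym (ginv1 G)))) cH_comp; cast_irr.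
Qed.

Lemma mirror_eps_mul2 (g h l : tH gunit) :
  teps (tmul gunit (tmul gunit g h) l) =
  \sum_(x <- tcop gunit gunit (mcast (esym (gmul1l gunit)) h))
     teps (tmul gunit g x.2) * teps (tmul gunit x.1 l).
Proof.
rewrite /mir_eps /mir_mul !cH_mul (eps_mul2 HX).
rewrite -(sum_mir_cop_unit h (fun a b => eps (mul e _ b) * eps (mul e a _))).
by apply: eq_bigr => x _; rewrite !cH_mul.
Qed.

Lemma mirror_eps_mul3 (g h l : tH gunit) :
  teps (tmul gunit (tmul gunit g h) l) =
  \sum_(x <- tcop gunit gunit (mcast (esym (gmul1l gunit)) h))
     teps (tmul gunit g x.1) * teps (tmul gunit x.2 l).
Proof.
rewrite /mir_eps /mir_mul !cH_mul (eps_mul3 HX).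
rewrite -(sum_mir_cop_unit h (fun a b => eps (mul e _ a) * eps (mul e b _))).
by apply: eq_bigr => x _; rewrite !cH_mul.
Qed.

Lemma mirror_cop_mul p q (a b : tH (gmul p q)) :
  teq2 (tcop p q (tmul (gmul p q) a b))
       (tmul2 k G tH tmul p q (tcop p q a) (tcop p q b)).
Proof.
move=> Z B hB; have hB' := bilin_comp hB (piE_lin (mir_conj p q)) (@islin_id _ _).
rewrite /tmul2 big_allpairs_dep !sum_mir_cop (copE_mul _ _ _ hB').
apply: eq_bigr => x _; rewrite sum_mir_cop; apply: eq_bigr => y _ /=.
by rewrite piE_mul.
Qed.

Lemma mirror_pi_cop p q r (h : tH (gmul q r)) :
  teq2 [seq (tpi p q x.1, tpi p r x.2) | x <- tcop q r h]
       (tcop (gconj p q) (gconj p r) (mcast (gconjM p q r) (tpi p (gmul q r) h))).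
Proof.
move=> Z B hB.
have hB' := bilin_comp hB (piE_lin (mir_conj (gconj p q) (gconj p r))) (@islin_id _ _).
have Ea : gconj p (mir_idx q r) = mir_idx (gconj p q) (gconj p r) by gsolve.
have Eb : gconj p (ginv r) = ginv (gconj p r) by gsolve.
rewrite big_map !sum_mir_cop mcastE mir_piE piE_castr.
rewrite -(sum_copE_pi (mir_dom q r) Ea Eb _ _ _ hB').
apply: eq_bigr => x _ /=; rewrite !mir_piE; congr (B _ _); last exact: piE_irr.
by apply: piE_comp_eq; gsolve.
Qed.

Lemma sum_mir_cop_l p q r h (Z : lmodType k) (T : tH p -> tH q -> tH r -> Z) :
  trilin T ->
  \sum_(x <- cop_l k G tH tcop p q r h) T x.1.1 x.1.2 x.2 =
  \sum_(x <- copE (mir_dom (gmul p q) r) h) \sum_(z <- copE (mir_idxM p q r) x.1)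
     T (piE (mir_conj p q) (piE (mir_idx_conj p q r) z.1)) (piE (mir_conj q r) z.2) x.2.
Proof.
move=> hT; rewrite sum_cop_l sum_mir_cop; apply: eq_bigr => x _ /=.
have hB := bilin_comp (trilin_bilin x.2 hT) (piE_lin (mir_conj p q)) (@islin_id _ _).
by rewrite sum_mir_cop (sum_copE_pi _ _ _ (mir_conj (gmul p q) r) (mir_dom p q) _ hB).
Qed.

Lemma trilin_mir_l p q r (Z : lmodType k) (T : tH p -> tH q -> tH r -> Z) :
  trilin T -> trilin (fun u v w =>
    T (piE (mir_conj p q) (piE (mir_idx_conj p q r) u)) (piE (mir_conj q r) v) w).
Proof.
by move=> hT; apply: trilin_comp hT (islin_comp (piE_lin _) (piE_lin _)) (piE_lin _) _.
Qed.

Lemma mirror_coassoc p q r (h : tH (gmul (gmul p q) r)) :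
  teq3 (cop_l k G tH tcop p q r h)
       (cop_r k G tH tcop p q r (mcast (esym (gmulA p q r)) h)).
Proof.
move=> Z T hT; rewrite (sum_mir_cop_l _ hT) sum_cop_r sum_mir_cop mcastE copE_castl /=.
move: (etrans _ _) => E.
rewrite (copE_coassoc _ (mir_dom q r) _ E h (trilin_mir_l hT)); apply: eq_bigr => x _.
rewrite sum_mir_cop; apply: eq_bigr => z _ /=.
by rewrite (piE_comp erefl _ _ (mir_conj p (gmul q r))).
Qed.

Lemma sum_mir_cop_one p q r (Z : lmodType k)
    (B : H (mir_idx p q) -> H (ginv q) -> Z) : bilin B ->
  \sum_(x <- copE (mir_idxM p q r) (one (mir_idx (gmul p q) r)))
     B (piE (mir_idx_conj p q r) x.1) (piE (mir_conj q r) x.2) =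
  \sum_(x <- copE (mir_dom p q) (one (ginv (gmul p q)))) B x.1 x.2.
Proof.
by move=> hB; rewrite -(piE_one (mir_conj (gmul p q) r)); apply: sum_copE_pi.
Qed.

Lemma mirror_cop_one1 p q r :
  teq3 (cop_l k G tH tcop p q r (tone (gmul (gmul p q) r)))
       (tmul3 k G tH tmul p q r [seq (x.1, x.2, tone r) | x <- tcop p q (tone (gmul p q))]
                    [seq (tone p, y.1, y.2) | y <- tcop q r (tone (gmul q r))]).
Proof.
move=> Z T hT; rewrite (sum_mir_cop_l _ hT).
rewrite (copE_one1 _ (mir_dom q r) _ (trilin_mir_l hT)) /tmul3 big_allpairs_dep.
rewrite big_map sum_mir_cop.
pose B u v := \sum_(y <- copE (mir_dom q r) (one (ginv (gmul q r))))
  T (piE (mir_conj p q) u) (mul (ginv q) v (piE (mir_conj q r) y.1)) y.2.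
have hB : bilin B.
  split=> [v|u]; apply: islin_sum => y.
    exact: islin_comp ((trilin_bilin y.2 hT).1 _) (piE_lin _).
  exact: islin_comp ((trilin_bilin y.2 hT).2 _) ((mul_bilin HX (ginv q)).1 _).
rewrite /mir_one /mir_mul.
transitivity (\sum_(x <- copE (mir_dom p q) (one (ginv (gmul p q)))) B x.1 x.2).
  rewrite -(sum_mir_cop_one r hB); apply: eq_bigr => x _; apply: eq_bigr => y _.
  by rewrite piE_mul.
apply: eq_bigr => x _; rewrite big_map sum_mir_cop; apply: eq_bigr => y _ /=.
by rewrite (mulx1 HX) (mul1x HX).
Qed.

Lemma mirror_cop_one2 p q r :
  teq3 (cop_l k G tH tcop p q r (tone (gmul (gmul p q) r)))
       (tmul3 k G tH tmul p q r [seq (tone p, y.1, y.2) | y <- tcop q r (tone (gmul q r))]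
                    [seq (x.1, x.2, tone r) | x <- tcop p q (tone (gmul p q))]).
Proof.
move=> Z T hT; rewrite (sum_mir_cop_l _ hT).
rewrite (copE_one2 _ (mir_dom q r) _ (trilin_mir_l hT)) /tmul3 big_allpairs_dep.
rewrite big_map sum_mir_cop.
apply: eq_bigr => y _ /=.
pose B u v := T (piE (mir_conj p q) u) (mul (ginv q) (piE (mir_conj q r) y.1) v) y.2.
have hB : bilin B.
  split=> [v|u]; first exact: islin_comp ((trilin_bilin y.2 hT).1 _) (piE_lin _).
  exact: islin_comp ((trilin_bilin y.2 hT).2 _) ((mul_bilin HX (ginv q)).2 _).
rewrite /mir_one /mir_mul.
transitivity (\sum_(x <- copE (mir_dom p q) (one (ginv (gmul p q)))) B x.1 x.2).
  by rewrite -(sum_mir_cop_one r hB); apply: eq_bigr => x _; rewrite piE_mul.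
by rewrite big_map sum_mir_cop; apply: eq_bigr => x _ /=; rewrite (mulx1 HX) (mul1x HX).
Qed.

Lemma mir_eps_sE p (h : tH gunit) : teps_s p h = eps_s (ginv p) (cH (ginv1 G) h).
Proof.
have Ea : mir_idx p e = ginv p by gsolve.
rewrite -(copE_eps_s (mir_dom p e) Ea (ginv1 G)) /Defs.eps_s sum_mir_cop.
apply: eq_bigr => y _ /=.
by rewrite (piE_unit _ erefl Ea) /mir_eps /mir_mul cH_mul; cast_irr.
Qed.

Lemma mir_eps_tE p (Ep : gconj (ginv p) e = e) (h : tH gunit) :
  teps_t p h = eps_t (ginv p) (piE Ep (cH (ginv1 G) h)).
Proof.
have Ea : mir_idx e p = e by gsolve.
have Ew : gconj (ginv p) e = mir_idx e p by gsolve.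
rewrite -(copE_eps_t (mir_dom e p) Ea erefl) /Defs.eps_t sum_mir_cop.
apply: eq_bigr => y _ /=; congr (_ *: _).
rewrite /mir_eps /mir_mul cH_mul piE_castr; set h0 := cH (ginv1 G) h.
have h0K : piE (etrans (mir_conj e p) (ginv1 G)) (piE Ew h0) = h0.
  exact: piEV (gmulVr p) erefl h0.
rewrite -{1}h0K -piE_mul.
rewrite -[eps (piE _ _)]/(epsE erefl _) (epsE_pi _ _ Ea) /epsE cH_mul piE_castr.
by rewrite (piE_irr (etrans Ew Ea) Ep).
Qed.

Lemma mirror_S_epst p (h : tH p) :
  tS p h = \sum_(x <- tcop p gunit (mcast (esym (gmul1r p)) h))
              tmul (ginv p) (tS p x.1) (teps_t (ginv p) x.2).
Proof.
have Ea : mir_idx p e = ginv p by gsolve.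
have Ep : gconj (ginv (ginv p)) e = e by gsolve.
rewrite mir_SE {1}(S_epst HX) (lin_sum _ _ (piE_lin _)).
rewrite -[cop _ _ _]/(copE _ _) mcastE sum_mir_cop copE_castl.
move: (etrans _ _) => E; rewrite (sum_copE_castr Ea (ginv1 G) E).
apply: eq_bigr => y _ /=.
rewrite (mir_eps_tE Ep) mir_SE piE_mul (piE_eps_t _ (gconj1 p)).
rewrite (piE_unit _ erefl Ea) !piE_castl /mir_mul; congr (mul _ _ (eps_t _ _)).
by apply: piE_eq; gsolve.
Qed.

Lemma mirror_S_epss p (h : tH p) :
  tS p h = \sum_(x <- tcop gunit p (mcast (esym (gmul1l p)) h))
              tmul (ginv p) (teps_s (ginv p) x.1) (tS p x.2).
Proof.
have Ea : mir_idx e p = e by gsolve.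
rewrite mir_SE {1}(S_epss HX) (lin_sum _ _ (piE_lin _)).
rewrite -[cop _ _ _]/(copE _ _) mcastE sum_mir_cop copE_castl.
move: (etrans _ _) => E; rewrite (sum_copE_castr Ea erefl E).
apply: eq_bigr => y _ /=.
rewrite mir_eps_sE mir_SE piE_mul (piE_eps_s _ (gconj1 p)) /mir_mul piE_castr piE_castl.
by rewrite /piE; cast_irr.
Qed.

Lemma mir_SV p (Ei : gconj (ginv p) (ginv p) = ginv p) (z : tH (ginv p)) :
  mcast (ginvK p) (tS (ginv p) z) = piE Ei (cH (ginvK (ginv p)) (S (ginv (ginv p)) z)).
Proof. by rewrite mcastE mir_SE piE_castr piE_castl; apply: piE_irr. Qed.

Lemma sum_mir_cop_Vr p (Ei : gconj (ginv p) (ginv p) = ginv p) (Z : nmodType)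
    (h : tH gunit) (F : tH p * tH (ginv p) -> Z) :
  \sum_(x <- tcop p (ginv p) (mcast (esym (gmulVr p)) h)) F x =
  \sum_(x <- cop (ginv p) (ginv (ginv p)) (cH (esym (gmulVr (ginv p))) (cH (ginv1 G) h)))
     F (piE Ei x.1, x.2).
Proof.
have Ea : mir_idx p (ginv p) = ginv p by gsolve.
rewrite -[cop _ _ _]/(copE _ _) copE_castl mcastE sum_mir_cop copE_castl.
move: (etrans (f_equal _ _) _) => E; rewrite (sum_copE_castr Ea erefl E).
by apply: eq_bigr => y _ /=; rewrite piE_castl /piE; cast_irr.
Qed.

Lemma sum_mir_cop_Vl p (Ei : gconj (ginv p) (ginv p) = ginv p)
    (Ed : gconj p (ginv e) = e)
    (h : tH gunit) (Z : lmodType k) (B : tH (ginv p) -> tH p -> Z) : bilin B ->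
  \sum_(x <- tcop (ginv p) p (mcast (esym (gmulVl p)) h)) B x.1 x.2 =
  \sum_(x <- cop (ginv (ginv p)) (ginv p) (cH (esym (gmulVl (ginv p))) (piE Ed h)))
     B x.1 (piE Ei x.2).
Proof.
move=> hB; have hB' := bilin_comp hB (@islin_id _ _) (piE_lin Ei).
have Ea : gconj p (mir_idx (ginv p) p) = ginv (ginv p) by gsolve.
have Ep : gconj p (ginv p) = ginv p by gsolve.
rewrite mcastE sum_mir_cop copE_castl; move: (etrans _ _) => E.
rewrite -[cop _ _ _]/(copE _ _) -(sum_copE_pi E Ea Ep _ _ _ hB').
apply: eq_bigr => y _ /=; rewrite (piEV Ep Ei (gmulVl p) erefl).
by congr (B _ _); apply: piE_irr.
Qed.

Lemma mirror_S_ax2 p (h : tH gunit) (g : tH p) :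
  \sum_(x <- tcop p (ginv p) (mcast (esym (gmulVr p)) h))
     tmul p x.1 (tmul p (mcast (ginvK p) (tS (ginv p) x.2)) g) =
  tmul p (teps_t p h) g.
Proof.
have Ei : gconj (ginv p) (ginv p) = ginv p by gsolve.
have Ep : gconj p (ginv p) = ginv p by gsolve.
have Ee : gconj (ginv p) e = e by gsolve.
have gK : piE Ei (piE Ep g) = g := piEV Ep Ei (gmulVl p) erefl g.
transitivity (piE Ei (mul (ginv p) (eps_t (ginv p) (cH (ginv1 G) h)) (piE Ep g))).
  rewrite -(S_ax2 HX) (lin_sum _ _ (piE_lin Ei)) (sum_mir_cop_Vr Ei).
  by apply: eq_bigr => x _; rewrite /= mir_SV /mir_mul !piE_mul gK.
by rewrite piE_mul gK (piE_eps_t Ei Ee) -mir_eps_tE.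
Qed.

Lemma mirror_S_ax3 p (h : tH gunit) (g : tH p) :
  \sum_(x <- tcop p (ginv p) (mcast (esym (gmulVr p)) h))
     tmul p (tmul p g x.1) (mcast (ginvK p) (tS (ginv p) x.2)) =
  tmul p g (teps_t p h).
Proof.
have Ei : gconj (ginv p) (ginv p) = ginv p by gsolve.
have Ep : gconj p (ginv p) = ginv p by gsolve.
have Ee : gconj (ginv p) e = e by gsolve.
have gK : piE Ei (piE Ep g) = g := piEV Ep Ei (gmulVl p) erefl g.
transitivity (piE Ei (mul (ginv p) (piE Ep g) (eps_t (ginv p) (cH (ginv1 G) h)))).
  rewrite -(S_ax3 HX) (lin_sum _ _ (piE_lin Ei)) (sum_mir_cop_Vr Ei).
  by apply: eq_bigr => x _; rewrite /= mir_SV /mir_mul !piE_mul gK.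
by rewrite piE_mul gK (piE_eps_t Ei Ee) -mir_eps_tE.
Qed.

Lemma mirror_S_ax1 p (h : tH gunit) (g : tH p) :
  \sum_(x <- tcop (ginv p) p (mcast (esym (gmulVl p)) h))
     tmul p (mcast (ginvK p) (tS (ginv p) x.1)) (tmul p x.2 g) =
  tmul p (teps_s p h) g.
Proof.
have Ei : gconj (ginv p) (ginv p) = ginv p by gsolve.
have Ep : gconj p (ginv p) = ginv p by gsolve.
have Ee : gconj (ginv p) e = e by gsolve.
have Ed : gconj p (ginv e) = e by gsolve.
have gK : piE Ei (piE Ep g) = g := piEV Ep Ei (gmulVl p) erefl g.
pose B u v := mul (ginv p) (piE Ei (cH (ginvK (ginv p)) (S (ginv (ginv p)) u)))
  (mul (ginv p) v g).
have hB : bilin B.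
  have [ml mr] := mul_bilin HX (ginv p).
  split=> [v|u]; last exact: islin_comp (mr _) (ml _).
  exact: islin_comp (ml _)
    (islin_comp (piE_lin _) (islin_comp (cH_lin _) (S_lin HX _))).
transitivity (piE Ei (mul (ginv p) (eps_s (ginv p) (piE Ed h)) (piE Ep g))).
  rewrite -(S_ax1 HX) (lin_sum _ _ (piE_lin Ei)).
  under eq_bigr do rewrite (mir_SV Ei).
  rewrite (sum_mir_cop_Vl Ei Ed h hB).
  by apply: eq_bigr => x _; rewrite /B !piE_mul gK.
by rewrite piE_mul gK (piE_eps_s Ei Ee) (piEV Ed Ee (gmulVl p) (ginv1 G)) -mir_eps_sE.
Qed.

Lemma mirror_S_ax4 p (h : tH gunit) (g : tH p) :
  \sum_(x <- tcop (ginv p) p (mcast (esym (gmulVl p)) h))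
     tmul p (tmul p g (mcast (ginvK p) (tS (ginv p) x.1))) x.2 =
  tmul p g (teps_s p h).
Proof.
have Ei : gconj (ginv p) (ginv p) = ginv p by gsolve.
have Ep : gconj p (ginv p) = ginv p by gsolve.
have Ee : gconj (ginv p) e = e by gsolve.
have Ed : gconj p (ginv e) = e by gsolve.
have gK : piE Ei (piE Ep g) = g := piEV Ep Ei (gmulVl p) erefl g.
pose B u v := mul (ginv p)
  (mul (ginv p) g (piE Ei (cH (ginvK (ginv p)) (S (ginv (ginv p)) u)))) v.
have hB : bilin B.
  have [ml mr] := mul_bilin HX (ginv p).
  split=> [v|u]; last exact: mr.
  exact: islin_comp (ml _) (islin_comp (mr _)
    (islin_comp (piE_lin _) (islin_comp (cH_lin _) (S_lin HX _)))).
transitivity (piE Ei (mul (ginv p) (piE Ep g) (eps_s (ginv p) (piE Ed h)))).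
  rewrite -(S_ax4 HX) (lin_sum _ _ (piE_lin Ei)).
  under eq_bigr do rewrite (mir_SV Ei).
  rewrite (sum_mir_cop_Vl Ei Ed h hB).
  by apply: eq_bigr => x _; rewrite /B !piE_mul gK.
by rewrite piE_mul gK (piE_eps_s Ei Ee) (piEV Ed Ee (gmulVl p) (ginv1 G)) -mir_eps_sE.
Qed.

Lemma mirror_is_cgwhq : is_cgwhq k G tH tmul tone tcop teps tS tpi.
Proof.
split.
- exact: mirror_mul_bilin.
- exact: mirror_mul1x.
- exact: mirror_mulx1.
- exact: mirror_cop_lin.
- exact: mirror_eps_lin.
- exact: mirror_S_lin.
- exact: mirror_coassoc.
- exact: mirror_counit_l.
- exact: mirror_counit_r.
- exact: mirror_cop_mul.
- exact: mirror_cop_one1.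
- exact: mirror_cop_one2.
- exact: mirror_eps_mul1.
- exact: mirror_eps_mul2.
- exact: mirror_eps_mul3.
- exact: mirror_S_epst.
- exact: mirror_S_epss.
- exact: mirror_S_ax1.
- exact: mirror_S_ax2.
- exact: mirror_S_ax3.
- exact: mirror_S_ax4.
- exact: mirror_pi_lin.
- exact: mirror_pi_mul.
- exact: mirror_pi_one.
- exact: mirror_pi_bij.
- exact: mirror_pi_cop.
- exact: mirror_pi_eps.
- exact: mirror_pi_comp.
Qed.

End Mirror.

Theorem proposition3p3 (k : fieldType) (G : grp) (H : G -> lmodType k)
  (mul : forall p, H p -> H p -> H p) (one : forall p, H p)
  (cop : forall p q : G, H (gmul p q) -> seq (H p * H q))
  (eps : H gunit -> k) (S : forall p : G, H p -> H (ginv p))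
  (pi : forall p q : G, H q -> H (gconj p q)) :
  is_cgwhq k G H mul one cop eps S pi ->
  is_cgwhq k G (mirH k G H) (mir_mul k G H mul) (mir_one k G H one)
           (mir_cop k G H cop pi) (mir_eps k G H eps)
           (mir_S k G H S pi) (mir_pi k G H pi).
Proof. exact: mirror_is_cgwhq. Qed.
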